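(* Let $n\ge1$, let $\mathbf u(z)\in\mathbb R^n$ be a column vector function, let $A$ be a constant real skew-symmetric $n\times n$ matrix, and let $\nu\ne0$ be a constant. Define block matrices of block size $(1,n)\times(1,n)$ \[ {\cal B}_0=\begin{pmatrix} 1-\nu & 0\\ 0 & I_n \end{pmatrix},\quad {\cal B}_1=\begin{pmatrix} 0 & \mathbf u^T\\ \mathbf u & 0 \end{pmatrix},\quad {\cal B}_2=\begin{pmatrix} (\mathbf u,\mathbf u) & -(\mathbf u')^T\\ \mathbf u' & -\mathbf u\mathbf u^T \end{pmatrix}, \] \[ {\cal B}_3=\begin{pmatrix} 0 & 2(\mathbf u,\mathbf u)\mathbf u^T\\ 2(\mathbf u,\mathbf u)\mathbf u & \mathbf u'\mathbf u^T-\mathbf u(\mathbf u')^T \end{pmatrix},\quad {\cal A}_0=\begin{pmatrix} 0 & 0\\ 0 & A \end{pmatrix}, \] and \[ {\cal A}=-\nu^2\zeta(\zeta{\cal B}_0+{\cal B}_1)+z{\cal B}_0-\nu{\cal B}_2-\zeta^{-1}({\cal B}''_1-z{\cal B}_1-{\cal B}_3-{\cal A}_0),\qquad {\cal B}=\zeta{\cal B}_0+{\cal B}_1. \] Then the equation \[ \mathbf u'''= 3(\mathbf u,\mathbf u)\mathbf u'+3(\mathbf u,\mathbf u')\mathbf u+z\mathbf u'+\mathbf u+A\mathbf u \] admits the isomonodromic Lax representation ${\cal A}'={\cal B}_\zeta+[{\cal B},{\cal A}]$.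
   Context: Primes denote derivatives with respect to $z$; $\zeta$ is a spectral parameter independent of $z$; $(\cdot,\cdot)$ is the standard scalar product; $I_n$ the identity matrix. ''Admits the Lax representation'' means the matrix equation holds identically in $\zeta$ by virtue of the equation. *)

From HB Require Import structures.
From mathcomp Require Import all_boot all_order all_algebra.
From mathcomp Require Import all_classical all_reals all_analysis.
Set Implicit Arguments. Unset Strict Implicit. Unset Printing Implicit Defensive.
Import Order.TTheory GRing.Theory Num.Theory.
Local Open Scope ring_scope.

Section LaxDefs.
Variables (R : realType) (n : nat).

Definition dotp (v w : 'cV[R]_n) : R := (v^T *m w) 0 0.

Definition calB0 (nu : R) : 'M[R]_(1 + n) :=
  block_mx (1 - nu)%:M 0 0 1%:M.
Definition calB1 (v : 'cV[R]_n) : 'M[R]_(1 + n) :=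
  block_mx 0 v^T v 0.
Definition calB2 (v v' : 'cV[R]_n) : 'M[R]_(1 + n) :=
  block_mx (dotp v v)%:M (- v'^T) v' (- (v *m v^T)).
Definition calB3 (v v' : 'cV[R]_n) : 'M[R]_(1 + n) :=
  block_mx 0 ((2 * dotp v v) *: v^T) ((2 * dotp v v) *: v)
           (v' *m v^T - v *m v'^T).
Definition calA0 (A : 'M[R]_n) : 'M[R]_(1 + n) := block_mx 0 0 0 A.

Definition calB (nu : R) (u : R -> 'cV[R]_n) (zeta z : R) : 'M[R]_(1 + n) :=
  zeta *: calB0 nu + calB1 (u z).

Definition calA (nu : R) (A : 'M[R]_n) (u : R -> 'cV[R]_n) (zeta z : R)
  : 'M[R]_(1 + n) :=
  - (nu ^+ 2 * zeta) *: (zeta *: calB0 nu + calB1 (u z))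
  + z *: calB0 nu
  - nu *: calB2 (u z) (derive1 u z)
  - zeta^-1 *: (derive1 (derive1 (fun t => calB1 (u t))) z
                - z *: calB1 (u z) - calB3 (u z) (derive1 u z) - calA0 A).

End LaxDefs.

From HB Require Import structures.
From mathcomp Require Import all_boot all_order all_algebra.
From mathcomp Require Import all_classical all_reals all_analysis.
From mathcomp Require Import ring.
Import Order.TTheory GRing.Theory Num.Theory numFieldNormedType.Exports.
Local Open Scope ring_scope.
Set Implicit Arguments. Unset Strict Implicit. Unset Printing Implicit Defensive.

(* The Lax equation is an identity between Laurent polynomials in zeta.  As
   B = zeta B0 + B1 commutes with itself, [B, A] only involves the part
   z B0 - nu B2 - zeta^-1 C of A, where C = B1'' - z B1 - B3 - A0, and
   comparing the coefficients of zeta, 1 and zeta^-1 leaves three identities: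
   [B0, B2] = nu B1', then -nu B2' = z [B1, B0] - nu [B1, B2] - [B0, C], which
   holds for every curve u, and finally C' = [B1, C].  Only the last one uses
   the equation: its lower-left block is the formula for u''', and its
   upper-right block is the transpose of that formula, which is where
   A^T = -A enters. *)

Section matrix_derive.
Context {R : realFieldType} {V : normedModType R}.
Variables (x v : V).

Lemma is_derive_mx m k (M : V -> 'M[R]_(m, k)) (dM : 'M[R]_(m, k)) :
  (forall i j, is_derive x v (fun y => M y i j) (dM i j)) -> is_derive x v M dM.
Proof.
move=> dMij; have dvM : derivable M x v by apply/derivable_mxP => i j; case: (dMij i j).
apply: DeriveDef => //; rewrite derive_mx //; apply/matrixP => i j.
by rewrite mxE derive_val.
Qed.

Lemma is_derive_mx_coef m k (M : V -> 'M[R]_(m, k)) (dM : 'M[R]_(m, k)) i j :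
  is_derive x v M dM -> is_derive x v (fun y => M y i j) (dM i j).
Proof.
case=> dvM dMval; have dvMij := (derivable_mxP M x v).1 dvM i j.
by apply: DeriveDef => //; rewrite -dMval derive_mx // mxE.
Qed.

Lemma is_derive_mulmx m k p (F : V -> 'M[R]_(m, k)) (G : V -> 'M[R]_(k, p)) dF dG :
  is_derive x v F dF -> is_derive x v G dG ->
  is_derive x v (fun y => F y *m G y) (dF *m G x + F x *m dG).
Proof.
move=> dvF dvG; apply: is_derive_mx => i j.
have -> : (fun y => (F y *m G y) i j) =
    \sum_(l < k) ((fun y => F y i l) * (fun y => G y l j)).
  by apply/funext => y; rewrite mxE fct_sumE.
apply: is_derive_eq.
  by apply: is_derive_sum => l; apply: is_deriveM; exact: is_derive_mx_coef.
rewrite !mxE -big_split; apply: eq_bigr => l _.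
by rewrite /GRing.scale /= addrC mulrC [G x _ _ * _]mulrC.
Qed.

Lemma is_derive_trmx m k (F : V -> 'M[R]_(m, k)) dF :
  is_derive x v F dF -> is_derive x v (fun y => (F y)^T) dF^T.
Proof.
move=> dvF; apply: is_derive_mx => i j; rewrite mxE.
have -> : (fun y => (F y)^T i j) = fun y => F y j i by apply/funext => y; rewrite mxE.
exact: is_derive_mx_coef.
Qed.

Lemma is_derive_scalemx m k (c : V -> R) (F : V -> 'M[R]_(m, k)) dc dF :
  is_derive x v c dc -> is_derive x v F dF ->
  is_derive x v (fun y => c y *: F y) (dc *: F x + c x *: dF).
Proof.
move=> dvc dvF; apply: is_derive_mx => i j.
have -> : (fun y => (c y *: F y) i j) = c * (fun y => F y i j).
  by apply/funext => y; rewrite mxE.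
apply: is_derive_eq; first by apply: is_deriveM => //; exact: is_derive_mx_coef.
by rewrite !mxE addrC; congr (_ + _); exact: mulrC.
Qed.

Lemma is_derive_scalar_mx k (c : V -> R) dc :
  is_derive x v c dc -> is_derive x v (fun y => (c y)%:M : 'M[R]_k) dc%:M.
Proof.
move=> dvc; have -> : (fun y => (c y)%:M) = fun y => c y *: (1%:M : 'M[R]_k).
  by apply/funext => y; rewrite scalemx1.
apply: is_derive_eq; first by apply: is_derive_scalemx => //; exact: is_derive_cst.
by rewrite scaler0 addr0 scalemx1.
Qed.

Lemma is_derive_block_mx m1 m2 k1 k2 (Ful : V -> 'M[R]_(m1, k1))
    (Fur : V -> 'M[R]_(m1, k2)) (Fdl : V -> 'M[R]_(m2, k1)) (Fdr : V -> 'M[R]_(m2, k2))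
    dFul dFur dFdl dFdr :
  is_derive x v Ful dFul -> is_derive x v Fur dFur ->
  is_derive x v Fdl dFdl -> is_derive x v Fdr dFdr ->
  is_derive x v (fun y => block_mx (Ful y) (Fur y) (Fdl y) (Fdr y))
    (block_mx dFul dFur dFdl dFdr).
Proof.
move=> dvul dvur dvdl dvdr; apply: is_derive_mx => i j.
rewrite -[i]fintype.splitK -[j]fintype.splitK.
case: (fintype.split i) => a; case: (fintype.split j) => b /=.
all: under eq_fun do rewrite ?block_mxEul ?block_mxEur ?block_mxEdl ?block_mxEdr.
all: rewrite ?block_mxEul ?block_mxEur ?block_mxEdl ?block_mxEdr.
all: exact: is_derive_mx_coef.
Qed.

End matrix_derive.

Lemma is_derive_derive1 {R : realFieldType} {W : normedModType R} (f : R -> W) t :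
  derivable f t 1 -> is_derive t 1 f (derive1 f t).
Proof. by move=> /derivableP; rewrite derive1E. Qed.

Section lie_mx.
Variables (K : fieldType) (m : nat).
Implicit Types X Y Z : 'M[K]_m.

Definition lie_mx X Y := X *m Y - Y *m X.

Lemma lie_mxx X : lie_mx X X = 0.
Proof. exact: subrr. Qed.

Lemma lie_mxC X Y : lie_mx X Y = - lie_mx Y X.
Proof. by rewrite /lie_mx opprB. Qed.

Lemma lie_mxDl X Y Z : lie_mx (X + Y) Z = lie_mx X Z + lie_mx Y Z.
Proof. by rewrite /lie_mx mulmxDl mulmxDr addrACA opprD. Qed.

Lemma lie_mxDr X Y Z : lie_mx X (Y + Z) = lie_mx X Y + lie_mx X Z.
Proof. by rewrite lie_mxC lie_mxDl opprD -!lie_mxC. Qed.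

Lemma lie_mxNr X Y : lie_mx X (- Y) = - lie_mx X Y.
Proof. by rewrite /lie_mx mulmxN mulNmx opprB opprK addrC. Qed.

Lemma lie_mxBr X Y Z : lie_mx X (Y - Z) = lie_mx X Y - lie_mx X Z.
Proof. by rewrite lie_mxDr lie_mxNr. Qed.

Lemma lie_mxZl a X Y : lie_mx (a *: X) Y = a *: lie_mx X Y.
Proof. by rewrite /lie_mx -scalemxAl -scalemxAr scalerBr. Qed.

Lemma lie_mxZr a X Y : lie_mx X (a *: Y) = a *: lie_mx X Y.
Proof. by rewrite lie_mxC lie_mxZl -scalerN -lie_mxC. Qed.

Lemma lax_split (nu zeta z : K) B0 B1 B2 C dB1 dB2 dC :
  zeta != 0 ->
  lie_mx B0 B2 = nu *: dB1 ->
  - nu *: dB2 = z *: lie_mx B1 B0 - nu *: lie_mx B1 B2 - lie_mx B0 C ->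
  dC = lie_mx B1 C ->
  - (nu ^+ 2 * zeta) *: dB1 + B0 - nu *: dB2 - zeta^-1 *: dC =
  B0 + lie_mx (zeta *: B0 + B1)
    (- (nu ^+ 2 * zeta) *: (zeta *: B0 + B1) + z *: B0 - nu *: B2 - zeta^-1 *: C).
Proof.
move=> zeta0 coef1 coef0 coefN1.
rewrite !(lie_mxBr, lie_mxDr) !lie_mxZr lie_mxx scaler0 add0r.
rewrite !lie_mxDl !lie_mxZl lie_mxx scaler0 add0r coef1 -coefN1 -scaleNr coef0.
move: (lie_mx B1 B0) (lie_mx B1 B2) (lie_mx B0 C) => L10 L12 L0C.
rewrite !scalerDr !scalerA mulVf // scale1r [nu * zeta * nu]mulrAC -expr2.
rewrite !opprD !addrA; congr (_ - _ - _ - _).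
by rewrite scaleNr [RHS]addrC addrA.
Qed.
End lie_mx.

Section lax_pair.
Variables (R : realType) (n : nat).

Lemma dotpC (U U1 : 'cV[R]_n) : dotp U U1 = dotp U1 U.
Proof. by rewrite /dotp -[U in RHS]trmxK -trmx_mul [RHS]mxE. Qed.

Lemma trmx_mulmx_dotp (U U1 : 'cV[R]_n) : U^T *m U1 = (dotp U U1)%:M.
Proof. by apply/matrixP => i j; rewrite (ord1 i) (ord1 j) [RHS]mxE eqxx mulr1n. Qed.

Lemma mulmx_trmxA (U U1 U2 : 'cV[R]_n) : U *m U1^T *m U2 = dotp U1 U2 *: U.
Proof. by rewrite -mulmxA trmx_mulmx_dotp mul_mx_scalar. Qed.

Ltac mx_normalize :=
  rewrite ?(mul0mx, mulmx0, mulmxN, mulNmx, mulmxDl, mulmxDr, mulmxBl, mulmxBr,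
            scalerN, scaleNr);
  rewrite -?scalemxAl -?scalemxAr ?mulmxA ?mulmx_trmxA ?trmx_mulmx_dotp;
  rewrite ?(mul_scalar_mx, mul_mx_scalar, scalerN, scaleNr, scaler0, scalerA).

Ltac mx_ring :=
  apply/matrixP; let i := fresh "i" in let j := fresh "j" in
  move=> i j; rewrite ?(ord1 i) ?(ord1 j) !mxE ?big_ord1 ?mxE ?eqxx /=; ring.

(* The coefficient of [- zeta^-1] in [calA]. *)
Definition calC A (z : R) (U U1 U2 : 'cV[R]_n) : 'M[R]_(1 + n) :=
  calB1 U2 - z *: calB1 U - calB3 U U1 - calA0 A.

Definition dcalB2 (U U1 U2 : 'cV[R]_n) : 'M[R]_(1 + n) :=
  block_mx (2 * dotp U U1)%:M (- U2^T) U2 (- (U1 *m U^T + U *m U1^T)).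

Definition dcalB3 (U U1 U2 : 'cV[R]_n) : 'M[R]_(1 + n) :=
  block_mx 0 ((4 * dotp U U1) *: U^T + (2 * dotp U U) *: U1^T)
    ((4 * dotp U U1) *: U + (2 * dotp U U) *: U1) (U2 *m U^T - U *m U2^T).

Section derive_along.
Context {V : normedModType R}.
Variables (x v : V).

Lemma is_derive_dotp (f g : V -> 'cV[R]_n) df dg :
  is_derive x v f df -> is_derive x v g dg ->
  is_derive x v (fun y => dotp (f y) (g y)) (dotp df (g x) + dotp (f x) dg).
Proof.
move=> dvf dvg; apply: is_derive_eq.
  exact: (is_derive_mx_coef 0 0 (is_derive_mulmx (is_derive_trmx dvf) dvg)).
by rewrite mxE.
Qed.

Lemma is_derive_calB1 (f : V -> 'cV[R]_n) df :
  is_derive x v f df -> is_derive x v (fun y => calB1 (f y)) (calB1 df).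
Proof. by move=> dvf; apply: is_derive_block_mx; exact: is_derive_trmx. Qed.

Lemma is_derive_calB2 (f g : V -> 'cV[R]_n) dg :
  is_derive x v f (g x) -> is_derive x v g dg ->
  is_derive x v (fun y => calB2 (f y) (g y)) (dcalB2 (f x) (g x) dg).
Proof.
move=> dvf dvg; apply: is_derive_eq.
  apply: is_derive_block_mx.
  - by apply: is_derive_scalar_mx; exact: is_derive_dotp.
  - by apply: is_deriveN; exact: is_derive_trmx.
  - by apply: is_deriveN; apply: is_derive_mulmx => //; exact: is_derive_trmx.
by rewrite /dcalB2 [dotp (g x) _]dotpC mulr_natl mulr2n.
Qed.

Lemma is_derive_calB3 (f g : V -> 'cV[R]_n) dg :
  is_derive x v f (g x) -> is_derive x v g dg ->
  is_derive x v (fun y => calB3 (f y) (g y)) (dcalB3 (f x) (g x) dg).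
Proof.
move=> dvf dvg.
have dv2ff : is_derive x v (fun y => 2 * dotp (f y) (f y)) (4 * dotp (f x) (g x)).
  apply: is_derive_eq; first by apply: is_deriveZ; exact: is_derive_dotp.
  by rewrite [dotp (g x) _]dotpC /GRing.scale /=; ring.
apply: is_derive_eq.
  apply: is_derive_block_mx.
  - by apply: is_derive_scalemx => //; exact: is_derive_trmx.
  - exact: is_derive_scalemx.
  - by apply: is_deriveB; apply: is_derive_mulmx => //; exact: is_derive_trmx.
by rewrite /dcalB3 opprD addrA addrK.
Qed.

End derive_along.

Lemma derive1_calB1 (f : R -> 'cV[R]_n) :
  (forall t, derivable f t 1) ->
  derive1 (fun t => calB1 (f t)) = fun t => calB1 (derive1 f t).
Proof.
move=> dvf; apply/funext => t.
by rewrite !derive1E (derive_val (is_derive := is_derive_calB1 (derivableP (dvf t)))).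
Qed.

Lemma is_derive_calA nu A (u : R -> 'cV[R]_n) zeta z :
  (forall t, derivable u t 1) -> (forall t, derivable (derive1 u) t 1) ->
  derivable (derive1 (derive1 u)) z 1 ->
  is_derive z 1 (calA nu A u zeta)
    (- (nu ^+ 2 * zeta) *: calB1 (derive1 u z) + calB0 n nu
     - nu *: dcalB2 (u z) (derive1 u z) (derive1 (derive1 u) z)
     - zeta^-1 *: (calB1 (derive1 (derive1 (derive1 u)) z) - calB1 (u z)
                   - z *: calB1 (derive1 u z)
                   - dcalB3 (u z) (derive1 u z) (derive1 (derive1 u) z))).
Proof.
move=> hu1 hu2 hu3.
have du := is_derive_derive1 (hu1 z).
have du1 := is_derive_derive1 (hu2 z).
have du2 := is_derive_derive1 hu3.
rewrite /calA (derive1_calB1 hu1) (derive1_calB1 hu2).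
apply: is_derive_eq.
  apply: is_deriveB; last first.
    apply: is_deriveZ; apply: is_deriveB => //; apply: is_deriveB.
      apply: is_deriveB; first exact: is_derive_calB1.
      by apply: is_derive_scalemx; exact: is_derive_calB1.
    exact: is_derive_calB3.
  apply: is_deriveB; last by apply: is_deriveZ; exact: is_derive_calB2.
  apply: is_deriveD; last by apply: is_derive_scalemx; exact: is_derive_id.
  by apply: is_deriveZ; apply: is_deriveD => //; exact: is_derive_calB1.
by rewrite !(scaler0, add0r, addr0, subr0, scale1r) opprD addrA.
Qed.

Lemma is_derive_calB_spectral (nu zeta z : R) (u : R -> 'cV[R]_n) :
  is_derive zeta 1 (fun x => calB nu u x z) (calB0 n nu).
Proof.
apply: is_derive_eq; first by apply: is_deriveD; apply: is_derive_scalemx.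
by rewrite scale1r scaler0 !addr0.
Qed.

Lemma lie_calB0_block nu (a : 'M[R]_1) (b : 'M[R]_(1, n)) (c : 'M[R]_(n, 1))
    (d : 'M[R]_n) :
  lie_mx (calB0 n nu) (block_mx a b c d) = block_mx 0 (- nu *: b) (nu *: c) 0.
Proof.
rewrite /lie_mx /calB0 !mulmx_block opp_block_mx add_block_mx.
rewrite !(mul0mx, mulmx0, addr0, add0r, mul1mx, mulmx1, mul_scalar_mx, mul_mx_scalar).
rewrite !subrr !scalerBl !scale1r; congr block_mx.
  by rewrite addrAC subrr add0r scaleNr.
by rewrite opprB addrC subrK.
Qed.

Lemma lie_calB1_block (U : 'cV[R]_n) (a : 'M[R]_1) (b : 'M[R]_(1, n))
    (c : 'M[R]_(n, 1)) (d : 'M[R]_n) :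
  lie_mx (calB1 U) (block_mx a b c d) =
  block_mx (U^T *m c - b *m U) (U^T *m d - a *m U^T)
    (U *m a - d *m U) (U *m b - c *m U^T).
Proof.
rewrite /lie_mx /calB1 !mulmx_block opp_block_mx add_block_mx.
by rewrite !(mul0mx, mulmx0, addr0, add0r).
Qed.

Lemma calCE A z (U U1 U2 : 'cV[R]_n) :
  calC A z U U1 U2 =
  block_mx 0 (U2^T - z *: U^T - (2 * dotp U U) *: U^T)
    (U2 - z *: U - (2 * dotp U U) *: U) (- (U1 *m U^T - U *m U1^T) - A).
Proof.
rewrite /calC /calB1 /calB3 /calA0 scale_block_mx !opp_block_mx !add_block_mx.
by rewrite !(scaler0, subr0, sub0r, oppr0, addr0, add0r).
Qed.

Lemma lie_calB0_calB2 nu (U U1 : 'cV[R]_n) :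
  lie_mx (calB0 n nu) (calB2 U U1) = nu *: calB1 U1.
Proof. by rewrite lie_calB0_block scaleNr scalerN opprK scale_block_mx !scaler0. Qed.

Lemma lax_coef0 nu A z (U U1 U2 : 'cV[R]_n) :
  - nu *: dcalB2 U U1 U2 =
  z *: lie_mx (calB1 U) (calB0 n nu) - nu *: lie_mx (calB1 U) (calB2 U U1)
  - lie_mx (calB0 n nu) (calC A z U U1 U2).
Proof.
rewrite calCE lie_mxC !lie_calB0_block lie_calB1_block /dcalB2.
rewrite !scaleNr !scalerN !scale_block_mx !opp_block_mx !add_block_mx.
congr block_mx; mx_normalize; rewrite ?[dotp U1 U]dotpC; mx_ring.
Qed.

Lemma lax_coefN1 A z (U U1 U2 U3 : 'cV[R]_n) :
  A^T = - A ->
  U3 = (3 * dotp U U) *: U1 + (3 * dotp U U1) *: U + z *: U1 + U + A *m U ->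
  calB1 U3 - calB1 U - z *: calB1 U1 - dcalB3 U U1 U2 =
  lie_mx (calB1 U) (calC A z U U1 U2).
Proof.
move=> skewA ->.
have UtA : U^T *m A = - (A *m U)^T by rewrite trmx_mul skewA mulmxN opprK.
rewrite calCE lie_calB1_block /calB1 /dcalB3.
rewrite !scale_block_mx !opp_block_mx !add_block_mx.
rewrite !(scaler0, subr0, sub0r, oppr0, addr0, add0r).
congr block_mx; rewrite ?linearD ?linearZ /=; mx_normalize.
all: rewrite ?UtA ?[dotp U1 U]dotpC ?[dotp U2 U]dotpC; move: (A *m U) => AU.
all: mx_ring.
Qed.

End lax_pair.

Theorem mainTheorem11 (R : realType) (n : nat) (hn : (1 <= n)%N)
  (A : 'M[R]_n) (hA : A^T = - A) (nu : R) (hnu : nu != 0)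
  (u : R -> 'cV[R]_n)
  (hu1 : forall z, derivable u z 1)
  (hu2 : forall z, derivable (derive1 u) z 1)
  (hu3 : forall z, derivable (derive1 (derive1 u)) z 1)
  (hode : forall z,
     derive1 (derive1 (derive1 u)) z =
       (3 * dotp (u z) (u z)) *: derive1 u z
       + (3 * dotp (u z) (derive1 u z)) *: u z
       + z *: derive1 u z + u z + A *m u z) :
  forall zeta z : R, zeta != 0 ->
    derive1 (calA nu A u zeta) z =
      derive1 (fun x => calB nu u x z) zeta
      + (calB nu u zeta z *m calA nu A u zeta z
         - calA nu A u zeta z *m calB nu u zeta z).
Proof.
move=> zeta z zeta0.
rewrite !derive1E (derive_val (is_derive := is_derive_calA nu A zeta hu1 hu2 (hu3 z))).
rewrite (derive_val (is_derive := is_derive_calB_spectral nu zeta z u)).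
rewrite /calA /calB (derive1_calB1 hu1) (derive1_calB1 hu2).
apply: lax_split => //.
- exact: lie_calB0_calB2.
- exact: lax_coef0.
- exact: lax_coefN1 hA (hode z).
Qed.
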